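(* For every integer $k\ge1$ and every $n\ge2k$, the element $\Lambda_{\{1,2k\}}$ commutes in $U_q(\mathfrak{sl}_2)^{\otimes n}$ with $\Lambda_{\{1,2,4,\dots,2k\}}$ and with $\Lambda_{\{1,3,5,\dots,2k-1,2k\}}$.
   Context: Let $\mathbb{K}$ be a field and $q\in\mathbb{K}$ not a root of unity. $U_q(\mathfrak{sl}_2)$ is the associative $\mathbb{K}$-algebra with generators $E,F,K,K^{-1}$ and relations $KK^{-1}=K^{-1}K=1$, $KE=q^2EK$, $KF=q^{-2}FK$, $EF-FE=\frac{K-K^{-1}}{q-q^{-1}}$, with Casimir element $\Lambda=(q-q^{-1})^2EF+q^{-1}K+qK^{-1}$ and coproduct $\Delta(E)=E\otimes1+K\otimes E$, $\Delta(F)=F\otimes K^{-1}+1\otimes F$, $\Delta(K^{\pm1})=K^{\pm1}\otimes K^{\pm1}$. $\mathcal{I}_R$ is the subalgebra generated by $EK^{-1},F,K^{-1},\Lambda$, with algebra morphism $\tau_R:\mathcal{I}_R\to U_q(\mathfrak{sl}_2)\otimes\mathcal{I}_R$: $\tau_R(EK^{-1})=K^{-1}\otimes EK^{-1}$, $\tau_R(F)=K\otimes F-q^{-3}(q-q^{-1})^2F^2K\otimes EK^{-1}+q^{-1}(q+q^{-1})FK\otimes K^{-1}-q^{-1}FK\otimes\Lambda$, $\tau_R(K^{-1})=1\otimes K^{-1}-q^{-1}(q-q^{-1})^2F\otimes EK^{-1}$, $\tau_R(\Lambda)=1\otimes\Lambda$. $1^{\otimes\ell}\otimes\varphi\otimes1^{\otimes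 m}$ applies $\varphi$ to tensor position $\ell+1$. For $A=\{a_1<\dots<a_m\}\subseteq\{1,\dots,n\}$, $\Lambda_A=1^{\otimes(a_1-1)}\otimes(\mu_m\circ\cdots\circ\mu_2)(\Lambda)\otimes1^{\otimes(n-a_m)}$ with $\mu_i=(1^{\otimes(a_i-a_1-1)}\otimes\tau_R)\circ\cdots\circ(1^{\otimes(a_{i-1}-a_1+1)}\otimes\tau_R)\circ(1^{\otimes(a_{i-1}-a_1)}\otimes\Delta)$ (no $\tau_R$ factors when $a_i=a_{i-1}+1$). *)

(* Encoding of U_q(sl_2)^{\otimes n} by its universal property:
   an algebra generated by n mutually commuting copies of U_q(sl_2). *)
From HB Require Import structures.
From mathcomp Require Import all_boot all_algebra.
Set Implicit Arguments. Unset Strict Implicit. Unset Printing Implicit Defensive.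
Import GRing.Theory.
Local Open Scope ring_scope.

Inductive Ugen := GE | GF | GK | GKi.

(** [g i x] is the generator [x] placed in tensor position [i] (1-based),
    i.e. 1^{(i-1)} (x) x (x) 1^{(n-i)}.  [Uq_tensor_rep] says that these
    satisfy the defining relations of U_q(sl_2) in each position and that
    generators in different positions commute. *)
Definition Uq_tensor_rep (KK : fieldType) (A : algType KK) (q : KK) (n : nat)
    (g : nat -> Ugen -> A) : Prop :=
  (forall i, (1 <= i <= n)%N ->
     [/\ g i GK * g i GKi = 1, g i GKi * g i GK = 1,
         g i GK * g i GE = q ^+ 2 *: (g i GE * g i GK),
         g i GK * g i GF = q ^- 2 *: (g i GF * g i GK)
       & g i GE * g i GF - g i GF * g i GE = (q - q^-1)^-1 *: (g i GK - g i GKi)])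
  /\ (forall i j x y, (1 <= i <= n)%N -> (1 <= j <= n)%N -> i != j ->
        g i x * g j y = g j y * g i x).

(** Values of the four generators EK^{-1}, F, K^{-1}, Lambda of I_R. *)
Record IRval (A : Type) := IRv { vEK : A; vF : A; vKi : A; vL : A }.

Definition casimir (KK : fieldType) (A : algType KK) (q : KK) (x : Ugen -> A) : A :=
  (q - q^-1) ^+ 2 *: (x GE * x GF) + q^-1 *: x GK + q *: x GKi.

Definition ir_embed (KK : fieldType) (A : algType KK) (q : KK) (x : Ugen -> A) :
    IRval A :=
  IRv (x GE * x GKi) (x GF) (x GKi) (casimir q x).

(** Coproduct applied at a position p whose generators are [x]; [r] gives
    the images (under all later maps) of the generators of I_R placed at
    position p+1.  Delta maps I_R into U (x) I_R:
      Delta(EK^-1) = EK^-1 (x) K^-1 + 1 (x) EK^-1,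
      Delta(F)     = F (x) K^-1 + 1 (x) F,
      Delta(K^-1)  = K^-1 (x) K^-1,
      Delta(Lambda)= (q-q^-1)^2 (EF (x) K^-1 + E (x) F + KF (x) EK^-1)
                     + K (x) (Lambda - q K^-1) + q K^-1 (x) K^-1. *)
Definition ir_coprod (KK : fieldType) (A : algType KK) (q : KK) (x : Ugen -> A)
    (r : IRval A) : IRval A :=
  IRv (x GE * x GKi * vKi r + vEK r)
      (x GF * vKi r + vF r)
      (x GKi * vKi r)
      ((q - q^-1) ^+ 2 *: (x GE * x GF * vKi r + x GE * vF r + x GK * x GF * vEK r)
        + x GK * (vL r - q *: vKi r) + q *: (x GKi * vKi r)).

Definition ir_tau (KK : fieldType) (A : algType KK) (q : KK) (x : Ugen -> A)
    (r : IRval A) : IRval A :=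
  IRv (x GKi * vEK r)
      (x GK * vF r
        - (q ^- 3 * (q - q^-1) ^+ 2) *: (x GF * x GF * x GK * vEK r)
        + (q^-1 * (q + q^-1)) *: (x GF * x GK * vKi r)
        - q^-1 *: (x GF * x GK * vL r))
      (vKi r - (q^-1 * (q - q^-1) ^+ 2) *: (x GF * vEK r))
      (vL r).

(** [ir_push q g S hi d]: images of the generators of I_R sitting at position
    p = hi - d under all subsequent maps of the construction of Lambda_S
    (positions p+1, ..., hi); at position p the map applied is Delta if
    p \in S and tau_R otherwise. *)
Fixpoint ir_push (KK : fieldType) (A : algType KK) (q : KK) (g : nat -> Ugen -> A)
    (S : seq nat) (hi d : nat) : IRval A :=
  match d with
  | 0 => ir_embed q (g hi)
  | d'.+1 =>
      let p := (hi - d)%N in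
      let r := ir_push q g S hi d' in
      if p \in S then ir_coprod q (g p) r else ir_tau q (g p) r
  end.

(** Lambda_S for S = [:: a_1; ...; a_m] sorted increasingly (1-based). *)
Definition LambdaA (KK : fieldType) (A : algType KK) (q : KK) (g : nat -> Ugen -> A)
    (S : seq nat) : A :=
  vL (ir_push q g S (last 0%N S) (last 0%N S - head 0%N S)).

Definition set_1_2k (k : nat) : seq nat := [:: 1%N; (2 * k)%N].
Definition set_even (k : nat) : seq nat := 1%N :: [seq (2 * i)%N | i <- iota 1 k].
Definition set_odd (k : nat) : seq nat :=
  [seq (2 * i + 1)%N | i <- iota 0 k] ++ [:: (2 * k)%N].

From HB Require Import structures.
From mathcomp Require Import all_boot all_algebra.
From mathcomp Require Import ring zify.
Set Implicit Arguments. Unset Strict Implicit. Unset Printing Implicit Defensive.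
Import GRing.Theory.
Local Open Scope ring_scope.

(* Both Lambda_{1,N} and Lambda_S, for any S with minimum 1 and maximum N, are
   obtained by pushing the generators EK^{-1}, F, K^{-1}, Lambda of I_R from
   position N leftwards, through one map per position (Delta at the points of
   the set, tau_R elsewhere), down to position 1, where both apply Delta.  For
   {1, N} every intermediate map is tau_R.  So one follows the pair (r, s) of
   images built so far by the two constructions, and shows that it satisfies a
   fixed finite list of quadratic relations: r and s each satisfy the relations
   of I_R, and every product s_i r_j rewrites as a combination of products
   r_j' s_i'.  These relations hold for r = s = the generators of I_R, they
   are preserved by (tau_R, tau_R) and (tau_R, Delta) taken at a new position
   (whose generators commute with r and s), and they force the Lambda
   components of (Delta r, Delta s) to commute.  Each of these finitely many
   implications is an identity in a free algebra modulo quadratic relations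
   with coefficients in Z[q, q^{-1}], certified by a noncommutative rewriting
   procedure run with vm_compute. *)

(** * Rewriting in free algebras over Z[q, q^{-1}] *)

(* [QTerm c e w] stands for c q^e times the word w in the atoms. *)
Record qterm := QTerm { qt_coef : int; qt_exp : int; qt_word : seq nat }.
Arguments QTerm qt_coef%_Z qt_exp%_Z qt_word.

Definition qpoly := seq qterm.

Definition qatom (i : nat) : qpoly := [:: QTerm 1 0 [:: i]].

Definition qterm_mul (t u : qterm) : qterm :=
  QTerm (qt_coef t * qt_coef u) (qt_exp t + qt_exp u) (qt_word t ++ qt_word u).

Definition qpoly_mul (p p' : qpoly) : qpoly := [seq qterm_mul t u | t <- p, u <- p'].

Definition qpoly_opp (p : qpoly) : qpoly :=
  [seq QTerm (- qt_coef t) (qt_exp t) (qt_word t) | t <- p].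

Definition qpoly_commutator (p p' : qpoly) : qpoly :=
  qpoly_mul p p' ++ qpoly_opp (qpoly_mul p' p).

Definition qpoly_atoms (p : qpoly) : seq nat := flatten [seq qt_word t | t <- p].

Record rule := Rule { lhs_l : nat; lhs_r : nat; rhs : qpoly }.

Definition comm_rule (ji : nat * nat) : rule := Rule ji.1 ji.2 [:: QTerm 1 0 [:: ji.2; ji.1]].

Definition rule_qpoly (r : rule) : qpoly :=
  QTerm 1 0 [:: lhs_l r; lhs_r r] :: qpoly_opp (rhs r).

Definition rules_atoms (R : seq rule) : seq nat :=
  flatten [seq lhs_l r :: lhs_r r :: qpoly_atoms (rhs r) | r <- R].

Fixpoint find_rule (R : seq rule) (a b : nat) : option qpoly :=
  if R is r :: R' then
    if (lhs_l r == a) && (lhs_r r == b) then Some (rhs r) else find_rule R' a b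
  else None.

(* The first redex of the word [a :: w], split as (prefix, right-hand side, suffix). *)
Fixpoint find_redex (R : seq rule) (a : nat) (w : seq nat) :
    option (seq nat * qpoly * seq nat) :=
  if w is b :: w' then
    if find_rule R a b is Some p then Some ([::], p, w') else
    if find_redex R b w' is Some (pre, p, suf) then Some (a :: pre, p, suf) else None
  else None.

Fixpoint add_qterm (t : qterm) (p : qpoly) : qpoly :=
  if p is u :: p' then
    if (qt_exp u == qt_exp t) && (qt_word u == qt_word t)
    then QTerm (qt_coef u + qt_coef t) (qt_exp u) (qt_word u) :: p'
    else u :: add_qterm t p'
  else [:: t].

(* A state (todo, nf) stands for the sum of the two polynomials; [nf] only
   contains irreducible words, with like terms collected. *)
Definition rewrite_step (R : seq rule) (st : qpoly * qpoly) : qpoly * qpoly :=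
  match st with
  | (t :: todo, nf) =>
      if (if qt_word t is a :: w then find_redex R a w else None) is Some (pre, p, suf) then
        (qpoly_mul (qpoly_mul [:: QTerm (qt_coef t) (qt_exp t) pre] p)
                   [:: QTerm 1 0 suf] ++ todo, nf)
      else (todo, add_qterm t nf)
  | _ => st
  end.

Definition reduces_to_zero (R : seq rule) (fuel : nat) (p : qpoly) : bool :=
  let st := iter fuel (rewrite_step R) (p, [::]) in
  nilp st.1 && all (fun t => qt_coef t == 0) st.2.

Definition subst_word (s : nat -> qpoly) (w : seq nat) : qpoly :=
  foldr (fun a => qpoly_mul (s a)) [:: QTerm 1 0 [::]] w.

Definition subst_qpoly (s : nat -> qpoly) (p : qpoly) : qpoly :=
  flatten [seq qpoly_mul [:: QTerm (qt_coef t) (qt_exp t) [::]] (subst_word s (qt_word t))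
          | t <- p].

Definition entails (R : seq rule) (fuel : nat) (s : nat -> qpoly) (R' : seq rule) : bool :=
  all (fun r => reduces_to_zero R fuel (subst_qpoly s (rule_qpoly r))) R'.

Section Evaluation.
Variables (KK : fieldType) (A : algType KK) (q : KK).
Hypothesis q_neq0 : q != 0.
Implicit Types (env : nat -> A) (p : qpoly) (R : seq rule).

Definition eval_qterm env (t : qterm) : A :=
  ((qt_coef t)%:~R * q ^ qt_exp t) *: \prod_(a <- qt_word t) env a.

Definition eval_qpoly env p : A := \sum_(t <- p) eval_qterm env t.

Fixpoint satisfies env R : Prop :=
  if R is r :: R' then
    env (lhs_l r) * env (lhs_r r) = eval_qpoly env (rhs r) /\ satisfies env R'
  else True.

Lemma eval_qpoly1 env t : eval_qpoly env [:: t] = eval_qterm env t.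
Proof. exact: big_seq1. Qed.

Lemma eval_qatom env i : eval_qpoly env (qatom i) = env i.
Proof. by rewrite eval_qpoly1 /eval_qterm big_seq1 mulr1 scale1r. Qed.

Lemma eval_qpoly_cat env p p' :
  eval_qpoly env (p ++ p') = eval_qpoly env p + eval_qpoly env p'.
Proof. exact: big_cat. Qed.

Lemma eval_qpoly_opp env p : eval_qpoly env (qpoly_opp p) = - eval_qpoly env p.
Proof.
rewrite /eval_qpoly big_map -sumrN; apply: eq_bigr => t _.
by rewrite /eval_qterm /= intrN mulNr scaleNr.
Qed.

Lemma eval_qterm_mul env t u :
  eval_qterm env (qterm_mul t u) = eval_qterm env t * eval_qterm env u.
Proof.
rewrite /eval_qterm /= big_cat intrM expfzDr // mulrACA.
by rewrite -scalerAl -scalerAr scalerA.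
Qed.

Lemma eval_qpoly_mul env p p' :
  eval_qpoly env (qpoly_mul p p') = eval_qpoly env p * eval_qpoly env p'.
Proof.
rewrite /eval_qpoly big_allpairs_dep mulr_suml; apply: eq_bigr => t _.
by rewrite mulr_sumr; apply: eq_bigr => u _; exact: eval_qterm_mul.
Qed.

Lemma eval_qpoly_ext env env' p : {in qpoly_atoms p, env =1 env'} ->
  eval_qpoly env p = eval_qpoly env' p.
Proof.
elim: p => [|t p IHp] eq_env; first by rewrite /eval_qpoly !big_nil.
rewrite /eval_qpoly !big_cons; congr (_ + _); last first.
  by apply: IHp => a a_p; apply: eq_env; rewrite /qpoly_atoms /= mem_cat a_p orbT.
rewrite /eval_qterm; congr (_ *: _); apply: eq_big_seq => a a_t.
by apply: eq_env; rewrite /qpoly_atoms /= mem_cat a_t.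
Qed.

Lemma satisfies_cat env R R' :
  satisfies env (R ++ R') <-> satisfies env R /\ satisfies env R'.
Proof. by elim: R => [|r R IHR] /=; [tauto | rewrite IHR; tauto]. Qed.

Lemma satisfies_ext env env' R : {in rules_atoms R, env =1 env'} ->
  satisfies env R -> satisfies env' R.
Proof.
elim: R => [|r R IHR] //= eq_env [sat_r sat_R].
have atom_r a : a \in (lhs_l r :: lhs_r r :: qpoly_atoms (rhs r)) ++ rules_atoms R ->
    env a = env' a := eq_env a.
split; last by apply: IHR => // a a_R; apply: atom_r; rewrite mem_cat a_R orbT.
rewrite -!atom_r ?inE ?eqxx ?orbT // sat_r; apply: eval_qpoly_ext => a a_r.
by apply: atom_r; rewrite !inE mem_cat a_r !orbT.
Qed.

Lemma eval_qatoms env m k :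
  map (eval_qpoly env) (map qatom (iota m k)) = [seq env i | i <- iota m k].
Proof. by rewrite -map_comp; apply: eq_map => i; exact: eval_qatom. Qed.

Lemma satisfies_comm_rules env (ps : seq (nat * nat)) :
  {in ps, forall ji, GRing.comm (env ji.1) (env ji.2)} -> satisfies env (map comm_rule ps).
Proof.
elim: ps => [|ji ps IHps] //= ps_comm; split.
  by rewrite ps_comm ?mem_head // eval_qpoly1 /eval_qterm /= !big_cons big_nil !mulr1 scale1r.
by apply: IHps => ji' ji'_ps; apply: ps_comm; rewrite inE ji'_ps orbT.
Qed.

Lemma find_rule_sound {env R a b p} : satisfies env R ->
  find_rule R a b = Some p -> env a * env b = eval_qpoly env p.
Proof.
elim: R => [|r R IHR] //= [sat_r sat_R].
by case: ifP => [/andP [/eqP <- /eqP <-] [<-] | _]; last exact: IHR.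
Qed.

Lemma find_redex_sound {env R a w pre p suf} : satisfies env R ->
  find_redex R a w = Some (pre, p, suf) ->
  \prod_(b <- a :: w) env b
    = \prod_(b <- pre) env b * eval_qpoly env p * \prod_(b <- suf) env b.
Proof.
move=> sat_R; elim: w a pre p suf => [|b w IHw] a pre p suf //=.
case rule_ab: (find_rule R a b) => [p'|].
  by case=> <- <- <-; rewrite !big_cons big_nil mul1r mulrA (find_rule_sound sat_R rule_ab).
case redex: (find_redex R b w) => [[[pre' p'] suf']|] // [<- <- <-].
by rewrite big_cons (IHw _ _ _ _ redex) !big_cons !mulrA.
Qed.

Lemma eval_add_qterm env t p :
  eval_qpoly env (add_qterm t p) = eval_qterm env t + eval_qpoly env p.
Proof.
rewrite /eval_qpoly; elim: p => [|u p IHp] /=; first by rewrite big_seq1 big_nil addr0.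
case: ifP => [/andP [/eqP exp_ut /eqP word_ut] | _]; rewrite !big_cons.
  by rewrite addrCA addrA /eval_qterm /= intrD mulrDl scalerDl exp_ut word_ut addrC.
by rewrite IHp addrCA.
Qed.

Definition eval_state env (st : qpoly * qpoly) : A :=
  eval_qpoly env st.1 + eval_qpoly env st.2.

Lemma eval_rewrite_step env R st : satisfies env R ->
  eval_state env (rewrite_step R st) = eval_state env st.
Proof.
move=> sat_R; case: st => [[|t todo] nf] //=; rewrite /eval_state /=.
case: t => c e [|a w] /=; first by rewrite eval_add_qterm /eval_qpoly big_cons addrCA addrA.
case redex: (find_redex R a w) => [[[pre p] suf]|] /=; last first.
  by rewrite eval_add_qterm /eval_qpoly big_cons addrCA addrA.
rewrite eval_qpoly_cat !eval_qpoly_mul !eval_qpoly1 [in RHS]/eval_qpoly big_cons.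
congr (_ + _ + _).
rewrite /eval_qterm /= (find_redex_sound sat_R redex) mulr1 scale1r.
by rewrite -!scalerAl.
Qed.

Lemma reduces_to_zero_sound {env R fuel p} : satisfies env R ->
  reduces_to_zero R fuel p -> eval_qpoly env p = 0.
Proof.
move=> sat_R; rewrite /reduces_to_zero.
have <- : eval_state env (iter fuel (rewrite_step R) (p, [::])) = eval_qpoly env p.
  elim: fuel => [|fuel IH]; first by rewrite /eval_state /eval_qpoly big_nil addr0.
  by rewrite iterS eval_rewrite_step.
case: (iter _ _ _) => [[|? ?] nf] /=; rewrite ?andbF //.
rewrite /eval_state /eval_qpoly big_nil add0r.
elim: nf => [|t nf IHnf] /=; first by rewrite big_nil.
by case/andP=> /eqP coef0 /IHnf; rewrite big_cons /eval_qterm coef0 mul0r scale0r add0r.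
Qed.

Lemma eval_subst_qpoly env s p :
  eval_qpoly env (subst_qpoly s p) = eval_qpoly (fun a => eval_qpoly env (s a)) p.
Proof.
have eval_word w : eval_qpoly env (subst_word s w) = \prod_(a <- w) eval_qpoly env (s a).
  elim: w => [|a w IHw] /=; last by rewrite eval_qpoly_mul IHw big_cons.
  by rewrite eval_qpoly1 /eval_qterm !big_nil /= mulr1 scale1r.
rewrite [LHS]big_flatten big_map; apply: eq_bigr => t _.
rewrite -/(eval_qpoly _ _) eval_qpoly_mul eval_word eval_qpoly1.
by rewrite /eval_qterm big_nil -scalerAl mul1r.
Qed.

Lemma eval_rule_qpoly env r :
  eval_qpoly env (rule_qpoly r) = env (lhs_l r) * env (lhs_r r) - eval_qpoly env (rhs r).
Proof.
rewrite [LHS]big_cons -/(eval_qpoly _ _) eval_qpoly_opp /eval_qterm /=.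
by rewrite !big_cons big_nil !mulr1 scale1r.
Qed.

Lemma entails_sound env R fuel s R' : satisfies env R -> entails R fuel s R' ->
  satisfies (fun a => eval_qpoly env (s a)) R'.
Proof.
move=> sat_R; elim: R' => [|r R' IHR'] //= /andP [red_r ent_R']; split; last exact: IHR'.
move: (reduces_to_zero_sound sat_R red_r).
by rewrite eval_subst_qpoly eval_rule_qpoly => /eqP; rewrite subr_eq0 => /eqP.
Qed.

End Evaluation.

(** * Certificates *)

Local Close Scope ring_scope.

(* Atoms 0-3 are (q - q^{-1})E, (q - q^{-1})F, K, K^{-1} at the current
   position, atoms 4-7 and 8-11 are (q - q^{-1})EK^{-1}, (q - q^{-1})F, K^{-1},
   Lambda in two images of I_R (see [u_atoms] and [ir_atoms] below); the
   rescaling turns every structure constant into a signed power of q.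
   [pair_rules] is the invariant: the relations of I_R among atoms 4-7 and
   among atoms 8-11, and a rule reordering each product (8-11)(4-7). *)
Definition uq_rules : seq rule :=
  [:: Rule 1 0 [:: QTerm 1 0 [:: 0; 1]; QTerm 1 (-1) [:: 2]; QTerm (-1) 1 [:: 2];
                   QTerm (-1) (-1) [:: 3]; QTerm 1 1 [:: 3]];
      Rule 2 0 [:: QTerm 1 2 [:: 0; 2]];
      Rule 2 1 [:: QTerm 1 (-2) [:: 1; 2]];
      Rule 2 3 [:: QTerm 1 0 [::]];
      Rule 3 0 [:: QTerm 1 (-2) [:: 0; 3]];
      Rule 3 1 [:: QTerm 1 2 [:: 1; 3]];
      Rule 3 2 [:: QTerm 1 0 [::]]].

Definition comm_rules : seq rule := map comm_rule [seq (j, i) | j <- iota 4 8, i <- iota 0 4].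

Definition pair_rules : seq rule :=
  [:: Rule 4 5 [:: QTerm (-1) 1 [::]; QTerm (-1) 3 [:: 6; 6]; QTerm 1 2 [:: 6; 7]];
      Rule 5 4 [:: QTerm (-1) 1 [::]; QTerm (-1) (-1) [:: 6; 6]; QTerm 1 0 [:: 6; 7]];
      Rule 6 4 [:: QTerm 1 (-2) [:: 4; 6]];
      Rule 6 5 [:: QTerm 1 2 [:: 5; 6]];
      Rule 7 4 [:: QTerm 1 0 [:: 4; 7]];
      Rule 7 5 [:: QTerm 1 0 [:: 5; 7]];
      Rule 7 6 [:: QTerm 1 0 [:: 6; 7]];
      Rule 8 9 [:: QTerm (-1) 1 [::]; QTerm (-1) 3 [:: 10; 10]; QTerm 1 2 [:: 10; 11]];
      Rule 9 8 [:: QTerm (-1) 1 [::]; QTerm (-1) (-1) [:: 10; 10]; QTerm 1 0 [:: 10; 11]];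
      Rule 10 8 [:: QTerm 1 (-2) [:: 8; 10]];
      Rule 10 9 [:: QTerm 1 2 [:: 9; 10]];
      Rule 11 8 [:: QTerm 1 0 [:: 8; 11]];
      Rule 11 9 [:: QTerm 1 0 [:: 9; 11]];
      Rule 11 10 [:: QTerm 1 0 [:: 10; 11]];
      Rule 8 4 [:: QTerm 1 0 [:: 4; 8]];
      Rule 8 5 [:: QTerm 1 0 [:: 5; 8]; QTerm 1 (-1) [:: 6; 10]; QTerm (-1) 3 [:: 6; 10];
                   QTerm (-1) 0 [:: 7; 10]; QTerm 1 2 [:: 7; 10]];
      Rule 8 6 [:: QTerm (-1) (-2) [:: 4; 10]; QTerm 1 0 [:: 4; 10]; QTerm 1 0 [:: 6; 8]];
      Rule 8 7 [:: QTerm 1 0 [:: 7; 8]];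
      Rule 9 4 [:: QTerm 1 0 [:: 4; 9]; QTerm (-1) (-1) [:: 6; 10]; QTerm 1 3 [:: 6; 10];
                   QTerm 1 0 [:: 7; 10]; QTerm (-1) 2 [:: 7; 10]];
      Rule 9 5 [:: QTerm 1 0 [:: 5; 9]];
      Rule 9 6 [:: QTerm 1 0 [:: 5; 10]; QTerm (-1) 2 [:: 5; 10]; QTerm 1 0 [:: 6; 9]];
      Rule 9 7 [:: QTerm 1 0 [:: 7; 9]];
      Rule 10 4 [:: QTerm 1 (-2) [:: 4; 10]];
      Rule 10 5 [:: QTerm 1 2 [:: 5; 10]];
      Rule 10 6 [:: QTerm 1 0 [:: 6; 10]];
      Rule 10 7 [:: QTerm 1 0 [:: 7; 10]];
      Rule 11 4 [:: QTerm 1 (-3) [:: 4; 10]; QTerm (-1) 1 [:: 4; 10]; QTerm 1 2 [:: 4; 11];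
                    QTerm (-1) (-1) [:: 6; 8]; QTerm 1 3 [:: 6; 8]; QTerm 1 0 [:: 7; 8];
                    QTerm (-1) 2 [:: 7; 8]];
      Rule 11 5 [:: QTerm (-1) (-1) [:: 5; 10]; QTerm 1 3 [:: 5; 10]; QTerm 1 (-2) [:: 5; 11];
                    QTerm 1 (-3) [:: 6; 9]; QTerm (-1) 1 [:: 6; 9]; QTerm (-1) (-2) [:: 7; 9];
                    QTerm 1 0 [:: 7; 9]];
      Rule 11 6 [:: QTerm (-1) (-2) [:: 4; 9]; QTerm 1 0 [:: 4; 9]; QTerm 1 (-2) [:: 5; 8];
                    QTerm (-1) 0 [:: 5; 8]; QTerm 1 (-3) [:: 6; 10]; QTerm (-1) (-1) [:: 6; 10];
                    QTerm (-1) 1 [:: 6; 10]; QTerm 1 3 [:: 6; 10]; QTerm 1 0 [:: 6; 11];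
                    QTerm (-1) (-2) [:: 7; 10]; QTerm 2 0 [:: 7; 10]; QTerm (-1) 2 [:: 7; 10]];
      Rule 11 7 [:: QTerm 1 0 [:: 7; 11]]].

Definition full_rules : seq rule := uq_rules ++ comm_rules ++ pair_rules.

(* Images of the four rescaled generators of I_R under tau_R and Delta, and
   their values in U_q(sl_2), when the I_R factor is given by atoms o, ..., o+3. *)
Definition tau_qpolys (o : nat) : seq qpoly :=
  [:: [:: QTerm 1 0 [:: 3; o]];
      [:: QTerm 1 0 [:: 2; o.+1]; QTerm (-1) (-3) [:: 1; 1; 2; o];
          QTerm 1 0 [:: 1; 2; o.+2]; QTerm 1 (-2) [:: 1; 2; o.+2];
          QTerm (-1) (-1) [:: 1; 2; o.+3]];
      [:: QTerm 1 0 [:: o.+2]; QTerm (-1) (-1) [:: 1; o]];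
      [:: QTerm 1 0 [:: o.+3]]].

Definition coprod_qpolys (o : nat) : seq qpoly :=
  [:: [:: QTerm 1 0 [:: 0; 3; o.+2]; QTerm 1 0 [:: o]];
      [:: QTerm 1 0 [:: 1; o.+2]; QTerm 1 0 [:: o.+1]];
      [:: QTerm 1 0 [:: 3; o.+2]];
      [:: QTerm 1 0 [:: 0; 1; o.+2]; QTerm 1 0 [:: 0; o.+1];
          QTerm 1 0 [:: 2; 1; o]; QTerm 1 0 [:: 2; o.+3];
          QTerm (-1) 1 [:: 2; o.+2]; QTerm 1 1 [:: 3; o.+2]]].

Definition embed_qpolys : seq qpoly :=
  [:: [:: QTerm 1 0 [:: 0; 3]];
      [:: QTerm 1 0 [:: 1]];
      [:: QTerm 1 0 [:: 3]];
      [:: QTerm 1 0 [:: 0; 1]; QTerm 1 (-1) [:: 2]; QTerm 1 1 [:: 3]]].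

Definition subst_list (ps : seq qpoly) (i : nat) : qpoly := nth (qatom i) ps i.

Definition rewrite_fuel : nat := 2 ^ 16.

Lemma embed_entails :
  entails uq_rules rewrite_fuel
    (subst_list (map qatom (iota 0 4) ++ embed_qpolys ++ embed_qpolys))
    pair_rules.
Proof. by vm_compute. Qed.

Lemma tau_tau_entails :
  entails full_rules rewrite_fuel
    (subst_list (map qatom (iota 0 4) ++ tau_qpolys 4 ++ tau_qpolys 8))
    pair_rules.
Proof. by vm_compute. Qed.

Lemma tau_coprod_entails :
  entails full_rules rewrite_fuel
    (subst_list (map qatom (iota 0 4) ++ tau_qpolys 4 ++ coprod_qpolys 8))
    pair_rules.
Proof. by vm_compute. Qed.

Lemma coprod_casimirs_commute :
  reduces_to_zero full_rules rewrite_fuel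
    (qpoly_commutator (nth [::] (coprod_qpolys 4) 3) (nth [::] (coprod_qpolys 8) 3)).
Proof. by vm_compute. Qed.

Lemma pair_rules_atoms : all (fun i => 4 <= i < 12) (rules_atoms pair_rules).
Proof. by []. Qed.

Local Open Scope ring_scope.

(** * The invariant of the two constructions *)

Lemma comm_scaler (R : pzRingType) (A : algType R) (a b : A) (k : R) :
  GRing.comm a b -> GRing.comm a (k *: b).
Proof. by move=> ab; rewrite /GRing.comm -scalerAr ab scalerAl. Qed.

Lemma comm_scalel (R : pzRingType) (A : algType R) (a b : A) (k : R) :
  GRing.comm a b -> GRing.comm (k *: a) b.
Proof. by move=> /commr_sym /comm_scaler ab; apply/commr_sym/ab. Qed.

Section Encoding.
Variables (KK : fieldType) (q : KK) (A : algType KK).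
Hypotheses (q_neq0 : q != 0) (q2_neq1 : q ^+ 2 != 1).

Definition uq_rel (x : Ugen -> A) : Prop :=
  [/\ x GK * x GKi = 1, x GKi * x GK = 1,
      x GK * x GE = q ^+ 2 *: (x GE * x GK),
      x GK * x GF = q ^- 2 *: (x GF * x GK)
    & x GE * x GF - x GF * x GE = (q - q^-1)^-1 *: (x GK - x GKi)].

Definition ir_comm (y : A) (r : IRval A) : Prop :=
  [/\ GRing.comm y (vEK r), GRing.comm y (vF r), GRing.comm y (vKi r)
    & GRing.comm y (vL r)].

Definition u_atoms (x : Ugen -> A) : seq A :=
  [:: (q - q^-1) *: x GE; (q - q^-1) *: x GF; x GK; x GKi].

Definition ir_atoms (r : IRval A) : seq A :=
  [:: (q - q^-1) *: vEK r; (q - q^-1) *: vF r; vKi r; vL r].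

Definition pair_env (x : Ugen -> A) (r s : IRval A) : nat -> A :=
  nth 0 (u_atoms x ++ ir_atoms r ++ ir_atoms s).

Definition centralizes (x : Ugen -> A) (r s : IRval A) : Prop :=
  forall y, ir_comm (x y) r /\ ir_comm (x y) s.

(* [pair_rules] does not involve atoms 0-3, so the choice of x is irrelevant
   (see [ir_pair_rel_of]). *)
Definition ir_pair_rel (r s : IRval A) : Prop :=
  forall x, satisfies q (pair_env x r s) pair_rules.

Lemma qcoef_pos_pos (c e : nat) : (Posz c)%:~R * q ^ (Posz e) = c%:R * q ^+ e.
Proof. by []. Qed.
Lemma qcoef_pos_neg (c e : nat) : (Posz c)%:~R * q ^ (Negz e) = c%:R * q ^- e.+1.
Proof. by []. Qed.
Lemma qcoef_neg_pos (c e : nat) : (Negz c)%:~R * q ^ (Posz e) = - c.+1%:R * q ^+ e.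
Proof. by rewrite NegzE intrN. Qed.
Lemma qcoef_neg_neg (c e : nat) : (Negz c)%:~R * q ^ (Negz e) = - c.+1%:R * q ^- e.+1.
Proof. by rewrite NegzE intrN. Qed.

Ltac eval_literal :=
  rewrite /eval_qpoly /eval_qterm /= ?big_cons ?big_nil /=;
  rewrite ?qcoef_pos_pos ?qcoef_pos_neg ?qcoef_neg_pos ?qcoef_neg_neg ?expr0 ?expr1;
  rewrite ?mulr1 ?mul1r ?mulN1r ?addr0 ?scale1r.

Ltac pull_scalars :=
  repeat (rewrite -scalerAl || rewrite -scalerAr); rewrite ?scalerA ?mulrA //.

Lemma eval_tau_qpolys env o x r :
  [seq env i | i <- iota 0 4] = u_atoms x -> [seq env i | i <- iota o 4] = ir_atoms r ->
  map (eval_qpoly q env) (tau_qpolys o) = ir_atoms (ir_tau q x r).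
Proof.
move=> /= -[_ e1 e2 e3] [r0 r1 r2 r3].
rewrite /=; congr [:: _; _; _; _]; eval_literal;
  rewrite ?e1 ?e2 ?e3 ?r0 ?r1 ?r2 ?r3; pull_scalars.
- have vKi_terms := addrA _ (_ *: (x GF * x GK * vKi r)) (_ *: (x GF * x GK * vKi r)).
  rewrite scalerBr scalerDr scalerBr !scalerA -!scaleNr !addrA -vKi_terms -scalerDl.
  by congr (_ + _ + _ + _); congr (_ *: _); field.
- by rewrite -scaleNr; congr (_ + _ *: _); ring.
Qed.

Lemma eval_coprod_qpolys env o x r :
  [seq env i | i <- iota 0 4] = u_atoms x -> [seq env i | i <- iota o 4] = ir_atoms r ->
  map (eval_qpoly q env) (coprod_qpolys o) = ir_atoms (ir_coprod q x r).
Proof.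
move=> /= -[e0 e1 e2 e3] [r0 r1 r2 r3].
rewrite /=; congr [:: _; _; _; _]; eval_literal;
  rewrite ?e0 ?e1 ?e2 ?e3 ?r0 ?r1 ?r2 ?r3; pull_scalars.
- by rewrite scalerDr.
- by rewrite scalerDr.
- by rewrite expr2 !scalerDr (mulrBr (x GK)) -scalerAr -scaleNr !addrA.
Qed.

Lemma eval_embed_qpolys env x :
  [seq env i | i <- iota 0 4] = u_atoms x ->
  map (eval_qpoly q env) embed_qpolys = ir_atoms (ir_embed q x).
Proof.
move=> /= -[e0 e1 e2 e3].
rewrite /=; congr [:: _; _; _; _]; eval_literal; rewrite ?e0 ?e1 ?e2 ?e3; pull_scalars.
by rewrite /casimir expr2 addrA.
Qed.

Lemma satisfies_uq_rules x r s : uq_rel x -> satisfies q (pair_env x r s) uq_rules.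
Proof.
case=> KKi KiK KE KF EF.
have EK : x GE * x GK = q ^- 2 *: (x GK * x GE).
  by rewrite KE scalerA mulVf ?scale1r // expf_neq0.
have FK : x GF * x GK = q ^+ 2 *: (x GK * x GF).
  by rewrite KF scalerA mulfV ?scale1r // expf_neq0.
have conj_Ki a : x GKi * a = x GKi * (a * x GK) * x GKi.
  by rewrite -!mulrA KKi mulr1.
have KiE : x GKi * x GE = q ^- 2 *: (x GE * x GKi).
  by rewrite conj_Ki EK -scalerAr -scalerAl !mulrA KiK mul1r.
have KiF : x GKi * x GF = q ^+ 2 *: (x GF * x GKi).
  by rewrite conj_Ki FK -scalerAr -scalerAl !mulrA KiK mul1r.
have FE : x GF * x GE = x GE * x GF - (q - q^-1)^-1 *: (x GK - x GKi).
  by rewrite -EF opprB addrC subrK.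
rewrite /pair_env /=; do ![split]; eval_literal; pull_scalars.
- rewrite FE scalerBr scalerA; congr (_ + _).
  rewrite !addrA -!scalerDl -addrA -scalerDl scalerBr opprB addrC -scaleNr.
  by congr (_ *: _ + _ *: _); field; rewrite q_neq0 subr_eq0 -expr2.
- by rewrite KE scalerA mulrC.
- by rewrite KF scalerA mulrC.
- by rewrite KiE scalerA mulrC.
- by rewrite KiF scalerA mulrC.
Qed.

Lemma u_atoms_comm x r : (forall y, ir_comm (x y) r) ->
  {in u_atoms x & ir_atoms r, forall a b, GRing.comm a b}.
Proof.
move=> xr a b; rewrite !inE.
case: (xr GE) (xr GF) (xr GK) (xr GKi) => [? ? ? ?] [? ? ? ?] [? ? ? ?] [? ? ? ?].
by do 2!case/or4P=> /eqP->; do ?[apply: comm_scalel | apply: comm_scaler].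
Qed.

Lemma satisfies_pair_comm_rules x r s :
  centralizes x r s -> satisfies q (pair_env x r s) comm_rules.
Proof.
move=> xrs; apply: satisfies_comm_rules => _ /allpairsP [[j i] [+ + ->]].
rewrite !mem_iota /= => /andP [le4j ltj12] i_in.
have xi_u : pair_env x r s i \in u_atoms x by rewrite /pair_env nth_cat i_in mem_nth.
have xj_rs : pair_env x r s j \in ir_atoms r ++ ir_atoms s.
  by rewrite /pair_env nth_cat ltnNge le4j mem_nth // size_cat /=; lia.
rewrite mem_cat in xj_rs; apply/commr_sym.
by case/orP: xj_rs => xj_in; apply: (u_atoms_comm _ xi_u xj_in) => y; case: (xrs y).
Qed.

Lemma satisfies_full_rules x r s : uq_rel x -> centralizes x r s -> ir_pair_rel r s ->
  satisfies q (pair_env x r s) full_rules.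
Proof.
move=> ux xrs rs; apply/satisfies_cat; split; first exact: satisfies_uq_rules.
by apply/satisfies_cat; split; [exact: satisfies_pair_comm_rules | exact: rs].
Qed.

Lemma ir_pair_rel_of x r s : satisfies q (pair_env x r s) pair_rules -> ir_pair_rel r s.
Proof.
move=> sat x'; apply: satisfies_ext sat => i /(allP pair_rules_atoms) /andP [le4i _].
by rewrite /pair_env !nth_cat /= ltnNge le4i.
Qed.

Lemma ir_pair_rel_of_entails R env ps x r s :
  satisfies q env R -> entails R rewrite_fuel (subst_list ps) pair_rules ->
  map (eval_qpoly q env) ps = u_atoms x ++ ir_atoms r ++ ir_atoms s -> ir_pair_rel r s.
Proof.
move=> sat_R ent eval_ps; apply: (ir_pair_rel_of (x := x)).
apply: satisfies_ext (entails_sound q_neq0 sat_R ent).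
move=> i /(allP pair_rules_atoms) /andP [_ lti12].
have size_ps : size ps = 12 by rewrite -(size_map (eval_qpoly q env)) eval_ps.
by rewrite /subst_list /pair_env -eval_ps (nth_map (qatom i)) ?size_ps.
Qed.

Lemma ir_pair_rel_embed x : uq_rel x -> ir_pair_rel (ir_embed q x) (ir_embed q x).
Proof.
move=> ux; set r := ir_embed q x.
apply: (ir_pair_rel_of_entails (satisfies_uq_rules r r ux) embed_entails).
by rewrite !map_cat eval_qatoms (eval_embed_qpolys (x := x)).
Qed.

Lemma ir_pair_rel_tau_tau x r s : uq_rel x -> centralizes x r s -> ir_pair_rel r s ->
  ir_pair_rel (ir_tau q x r) (ir_tau q x s).
Proof.
move=> ux xrs rs.
apply: (ir_pair_rel_of_entails (satisfies_full_rules ux xrs rs) tau_tau_entails).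
rewrite !map_cat eval_qatoms (eval_tau_qpolys (x := x) (r := r)) //.
by rewrite (eval_tau_qpolys (x := x) (r := s)).
Qed.

Lemma ir_pair_rel_tau_coprod x r s : uq_rel x -> centralizes x r s -> ir_pair_rel r s ->
  ir_pair_rel (ir_tau q x r) (ir_coprod q x s).
Proof.
move=> ux xrs rs.
apply: (ir_pair_rel_of_entails (satisfies_full_rules ux xrs rs) tau_coprod_entails).
rewrite !map_cat eval_qatoms (eval_tau_qpolys (x := x) (r := r)) //.
by rewrite (eval_coprod_qpolys (x := x) (r := s)).
Qed.

Lemma casimir_coprod_comm x r s : uq_rel x -> centralizes x r s -> ir_pair_rel r s ->
  GRing.comm (vL (ir_coprod q x r)) (vL (ir_coprod q x s)).
Proof.
move=> ux xrs rs.
have := reduces_to_zero_sound q_neq0 (satisfies_full_rules ux xrs rs) coprod_casimirs_commute.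
have eval_L o t : [seq pair_env x r s i | i <- iota o 4] = ir_atoms t ->
    eval_qpoly q (pair_env x r s) (nth [::] (coprod_qpolys o) 3%N) = vL (ir_coprod q x t).
  by move=> env_t; rewrite -(nth_map [::] 0) // (eval_coprod_qpolys (x := x) (r := t)).
rewrite eval_qpoly_cat eval_qpoly_opp !(eval_qpoly_mul q_neq0) (eval_L 4%N r) // (eval_L 8%N s) //.
by move/eqP; rewrite subr_eq0 => /eqP.
Qed.

End Encoding.

(** * Lambda_{1,N} commutes with Lambda_S *)

Ltac solve_comm comm_g :=
  repeat first [ apply: commrD | apply: commrB | apply: commrN | apply: commrM
               | apply: comm_scaler | apply: commr1 | apply: comm_g | assumption ].

Section TensorPower.
Variables (KK : fieldType) (q : KK) (n : nat) (A : algType KK) (g : nat -> Ugen -> A).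
Hypotheses (q_neq0 : q != 0) (q2_neq1 : q ^+ 2 != 1) (hg : Uq_tensor_rep q n g).

Lemma ir_comm_push S N d p y : (N <= n)%N -> (1 <= p)%N -> (p < N - d)%N ->
  ir_comm (g p y) (ir_push q g S N d).
Proof.
move=> leNn le1p; elim: d => [|d IHd] ltp.
  have comm_gN z : GRing.comm (g p y) (g N z) by apply: hg.2; [lia | lia | apply/eqP; lia].
  by split; rewrite /= /casimir; solve_comm comm_gN.
have comm_gd z : GRing.comm (g p y) (g (N - d.+1)%N z).
  by apply: hg.2; [lia | lia | apply/eqP; lia].
have [? ? ? ?] : ir_comm (g p y) (ir_push q g S N d) by apply: IHd; lia.
by rewrite /=; case: ifP => _; split; solve_comm comm_gd.
Qed.

Lemma ir_pair_rel_push S N d : (2 <= N <= n)%N -> (d <= N - 2)%N ->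
  ir_pair_rel q (ir_push q g [:: 1%N; N] N d) (ir_push q g S N d).
Proof.
move=> N_range; elim: d => [|d IHd] le_d.
  by apply: ir_pair_rel_embed => //; apply: hg.1; lia.
have ux : uq_rel q (g (N - d.+1)%N) by apply: hg.1; lia.
have xrs : centralizes (g (N - d.+1)%N) (ir_push q g [:: 1%N; N] N d) (ir_push q g S N d).
  by move=> y; split; apply: ir_comm_push; lia.
have rs := IHd (ltnW le_d).
rewrite /= (_ : (N - d.+1 \in [:: 1; N])%N = false); last by rewrite !inE; apply/negbTE; lia.
by case: ifP => _; [apply: ir_pair_rel_tau_coprod | apply: ir_pair_rel_tau_tau].
Qed.

Lemma LambdaA_edge_comm S N : (2 <= N <= n)%N -> head 0%N S = 1%N -> last 0%N S = N ->
  GRing.comm (LambdaA q g [:: 1%N; N]) (LambdaA q g S).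
Proof.
move=> N_range headS lastS.
have S1 : (1 \in S)%N by case: S headS {lastS} => //= a S' ->; rewrite mem_head.
rewrite /LambdaA lastS headS /= (_ : N - 1 = (N - 2).+1)%N; last by lia.
rewrite /= (_ : N - (N - 2).+1 = 1)%N; last by lia.
rewrite inE eqxx S1; apply: casimir_coprod_comm => //.
- by apply: hg.1; lia.
- by move=> y; split; apply: ir_comm_push; lia.
- by apply: ir_pair_rel_push.
Qed.

End TensorPower.

Theorem corollary4p12 (KK : fieldType) (q : KK) (hq0 : q != 0)
    (hq : forall m : nat, (0 < m)%N -> q ^+ m != 1)
    (k n : nat) (hk : (1 <= k)%N) (hn : (2 * k <= n)%N)
    (A : algType KK) (g : nat -> Ugen -> A) (hg : Uq_tensor_rep q n g) :
  LambdaA q g (set_1_2k k) * LambdaA q g (set_even k)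
    = LambdaA q g (set_even k) * LambdaA q g (set_1_2k k)
  /\
  LambdaA q g (set_1_2k k) * LambdaA q g (set_odd k)
    = LambdaA q g (set_odd k) * LambdaA q g (set_1_2k k).
Proof.
have N_range : (2 <= 2 * k <= n)%N by lia.
have head_odd : head 0%N (set_odd k) = 1%N by case: k hk {hn N_range}.
have last_odd : last 0%N (set_odd k) = (2 * k)%N by rewrite /set_odd last_cat.
have last_even : last 0%N (set_even k) = (2 * k)%N.
  case: k hk {hn N_range head_odd last_odd} => // k _.
  by rewrite /set_even -[k.+1]addn1 iotaD map_cat -cat_cons last_cat /= addnC.
by split; apply: (LambdaA_edge_comm hq0 (hq 2%N isT) hg).
Qed.
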